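(* Consider the two-player, two-item all-pay auction with budgets described in the context, with profile $(B_1,B_2,v_{11},v_{12},v_{21},v_{22})$. Suppose $B_1=B_2$ and $v_{11}=v_{12}=v_{21}=v_{22}$, and let $c=\min\{v_{11},B_1\}$. For $i\in\{1,2\}$ let player $i$'s mixed strategy be the probability distribution supported on the segment $\{(x_{i1},x_{i2}): x_{i1},x_{i2}\in[0,c],\ x_{i2}=-x_{i1}+c\}$ with constant density $f_i(x_{i1},x_{i2})=\frac{1}{\sqrt2\,c}$ with respect to arc length on that segment. Then this strategy profile $(f_1,f_2)$ is a Nash equilibrium.
   Context: Multi-item all-pay auction with budgets. Two players $i\in\{1,2\}$ ($-i$ is the opponent of $i$) and $n$ items $j\in\{1,\dots,n\}$. Player $i$ has budget $B_i\ge0$ and values item $j$ at $v_{ij}>0$. A pure strategy of player $i$ is a vector $(x_{i1},\dots,x_{in})$ with all $x_{ij}\ge0$ and $\sum_j x_{ij}\le B_i$; a mixed strategy is a probability distribution over this set. On each item $j$ the higher bid wins the item. Tie-breaking on item $j$: if $x_{1j}=x_{2j}=\min\{B_1,B_2,v_{1j},v_{2j}\}$ and $\min\{B_i,v_{ij}\}>\min\{B_{-i},v_{-ij}\}$ for some $i$, then player $i$ wins item $j$; in all other ties each player wins item $j$ with probability $\frac12$. Player $i$'s utility on item $j$ is $v_{ij}-x_{ij}$ if he wins it and $-x_{ij}$ otherwise, and his total utility is the sum over items. A Nash equilibrium is a pair of mixed strategies in which each player's strategy maximizes his expected total utility against the other's, over all mixed strategies satisfying his budget constraint. Here $n=2$.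 *)

From HB Require Import structures.
From mathcomp Require Import all_boot all_order all_algebra.
From mathcomp Require Import all_classical all_reals all_analysis.
Set Implicit Arguments. Unset Strict Implicit. Unset Printing Implicit Defensive.
Import Order.TTheory GRing.Theory Num.Theory.
Import numFieldNormedType.Exports.
Local Open Scope classical_set_scope.
Local Open Scope ring_scope.

Section AllPay.
Variable R : realType.

Definition win_prob (Bi Bo vi vo a b : R) : R :=
  if b < a then 1 else if a < b then 0 else
  let m := Num.min (Num.min Bi Bo) (Num.min vi vo) in
  if (a == m) && (Num.min Bo vo < Num.min Bi vi) then 1
  else if (a == m) && (Num.min Bi vi < Num.min Bo vo) then 0
  else 1 / 2.

Definition item_util (Bi Bo vi vo a b : R) : R :=
  win_prob Bi Bo vi vo a b * vi - a.

(* Pure strategies of a player are pairs (x_i1, x_i2) : R * R. *)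
Definition util1 (B1 B2 v11 v12 v21 v22 : R) (x1 x2 : R * R) : R :=
  item_util B1 B2 v11 v21 x1.1 x2.1 + item_util B1 B2 v12 v22 x1.2 x2.2.

Definition util2 (B1 B2 v11 v12 v21 v22 : R) (x1 x2 : R * R) : R :=
  item_util B2 B1 v21 v11 x2.1 x1.1 + item_util B2 B1 v22 v12 x2.2 x1.2.

Definition feasible (B : R) : set (R * R) :=
  [set x | 0 <= x.1 /\ 0 <= x.2 /\ x.1 + x.2 <= B].

Definition mixed_strategy (B : R) (P : probability (R * R)%type R) : Prop :=
  P (feasible B) = 1%E.

Definition EU1 (B1 B2 v11 v12 v21 v22 : R)
    (P1 P2 : probability (R * R)%type R) : \bar R :=
  (\int[P1]_x1 \int[P2]_x2 (util1 B1 B2 v11 v12 v21 v22 x1 x2)%:E)%E.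

Definition EU2 (B1 B2 v11 v12 v21 v22 : R)
    (P1 P2 : probability (R * R)%type R) : \bar R :=
  (\int[P1]_x1 \int[P2]_x2 (util2 B1 B2 v11 v12 v21 v22 x1 x2)%:E)%E.

Definition nash_eq (B1 B2 v11 v12 v21 v22 : R)
    (P1 P2 : probability (R * R)%type R) : Prop :=
  [/\ mixed_strategy B1 P1, mixed_strategy B2 P2,
      (forall Q1, mixed_strategy B1 Q1 ->
         (EU1 B1 B2 v11 v12 v21 v22 Q1 P2 <= EU1 B1 B2 v11 v12 v21 v22 P1 P2)%E) &
      (forall Q2, mixed_strategy B2 Q2 ->
         (EU2 B1 B2 v11 v12 v21 v22 P1 Q2 <= EU2 B1 B2 v11 v12 v21 v22 P1 P2)%E)].

(* arc-length (1-dim. Hausdorff) measure of A restricted to the segment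
   {(t, c - t) : t in [0, c]}, parametrized by t with speed sqrt 2 *)
Definition seg_param_set (c : R) (A : set (R * R)) : set R :=
  [set t : R | 0 <= t <= c /\ A (t, c - t)].

Definition seg_arclength (c : R) (A : set (R * R)) : \bar R :=
  ((Num.sqrt 2)%:E * lebesgue_measure (seg_param_set c A))%E.

Definition seg_distribution (c f : R) (A : set (R * R)) : \bar R :=
  (f%:E * seg_arclength c A)%E.

End AllPay.

From HB Require Import structures.
From mathcomp Require Import all_boot all_order all_algebra.
From mathcomp Require Import all_classical all_reals all_analysis.
From mathcomp Require Import measurable_realfun ring lra.
Import Order.TTheory GRing.Theory Num.Theory.
Local Open Scope classical_set_scope.
Local Open Scope ring_scope.
Set Implicit Arguments. Unset Strict Implicit. Unset Printing Implicit Defensive.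

(* Let c = min(v, B). Against the uniform distribution on the segment
   x1 + x2 = c, 0 <= x1 <= c, each coordinate of the opponent's bid is uniform
   on [0, c] and ties have probability zero, so a pure bid y earns
   v (clamp y1 + clamp y2) / c - (y1 + y2) in expectation, clamp being the
   truncation to [0, c]. On budget-feasible bids this is at most v - c (if
   c = v because clamp a <= a, if c = B < v because y1 + y2 <= B), with
   equality on the segment. So no mixed strategy earns more than v - c against
   the segment strategy, which itself earns v - c. For player 2 the order of
   integration in EU2 is swapped by Fubini, which is legitimate because the
   utilities are bounded on the feasible set, a set of full measure. *)

Lemma measurable_preimageT d d' (T : measurableType d) (U : measurableType d')
    (f : T -> U) (A : set U) :
  measurable_fun setT f -> measurable A -> measurable (f @^-1` A).
Proof. by move=> mf mA; rewrite -[_ @^-1` _]setTI; exact: mf. Qed.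

Section full_measure_set.
Context (R : realType) d (T : measurableType d) (Q : probability T R).
Variable F : set T.
Hypotheses (mF : measurable F) (QF : Q F = 1%E).
Local Open Scope ereal_scope.

Lemma ae_full_measure_set : {ae Q, forall x, F x}.
Proof.
exists (~` F); split => //; first exact: measurableC.
by rewrite probability_setC // QF subee.
Qed.

Lemma integral_eq_full (f g : T -> \bar R) :
  measurable_fun setT f -> measurable_fun setT g ->
  (forall x, F x -> f x = g x) -> \int[Q]_x f x = \int[Q]_x g x.
Proof.
move=> mf mg fg; apply: ae_eq_integral => //.
by apply: filterS ae_full_measure_set => x /fg.
Qed.

Lemma integral_full_cst (f : T -> \bar R) (K : R) : measurable_fun setT f ->
  (forall x, F x -> f x = K%:E) -> \int[Q]_x f x = K%:E.
Proof.
move=> mf fK; rewrite (integral_eq_full (g := cst K%:E)) //.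
by rewrite integral_cst //= probability_setT mule1.
Qed.

(* No integrability is needed: the integral of f is at most that of f^\+. *)
Lemma integral_full_le (f : T -> \bar R) (M : R) : measurable_fun setT f ->
  (0 <= M)%R -> (forall x, F x -> f x <= M%:E) -> \int[Q]_x f x <= M%:E.
Proof.
move=> mf M0 fM; rewrite integralE.
apply: (@le_trans _ _ (\int[Q]_x f^\+ x - 0)).
  by apply: leeB => //; exact: integral_ge0.
have fM_ae : {ae Q, forall x, setT x -> f^\+ x <= cst M%:E x}.
  apply: filterS ae_full_measure_set => x Fx _.
  by rewrite funepos.unlock /= ge_max fM // lee_fin.
rewrite sube0 -[leRHS]mule1 -(probability_setT Q) -integral_cst //.
by apply: ae_ge0_le_integral fM_ae => //; exact: measurable_funepos.
Qed.

End full_measure_set.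

Section fubini_full_measure_set.
Context (R : realType) d1 d2 (T1 : measurableType d1) (T2 : measurableType d2).
Variables (P : probability T1 R) (Q : probability T2 R).
Local Open Scope ereal_scope.

Lemma measurable_fun_integral1 (f : T1 * T2 -> R) : measurable_fun setT f ->
  measurable_fun setT (fun y => \int[P]_x (f (x, y))%:E).
Proof.
move=> mf; have mEf : measurable_fun setT (EFin \o f) by exact/measurable_EFinP.
rewrite (_ : (fun y => _) =
    fubini_G P (EFin \o f)^\+ \- fubini_G P (EFin \o f)^\-); last first.
  apply/funext => y; rewrite [LHS]integralE.
  by rewrite /fubini_G funepos.unlock funeneg.unlock.
apply: emeasurable_funB; apply: measurable_fun_fubini_tonelli_G => //.
- exact: measurable_funepos.
- exact: measurable_funeneg.
Qed.

Variable F : set T2.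
Hypotheses (mF : measurable F) (QF : Q F = 1).

Lemma Fubini_full (f : T1 * T2 -> R) (M : R) : measurable_fun setT f ->
  (forall x y, F y -> (`|f (x, y)| <= M)%R) ->
  \int[P]_x \int[Q]_y (f (x, y))%:E = \int[Q]_y \int[P]_x (f (x, y))%:E.
Proof.
move=> mf fM.
(* Set to 0 off F, f becomes bounded, hence integrable for P \x Q. *)
pose g z := (\1_F z.2 * f z)%R.
have mg : measurable_fun setT g.
  apply: measurable_funM => //.
  by apply: measurableT_comp; [exact: measurable_indic | exact: measurable_snd].
have gf x y : F y -> g (x, y) = f (x, y).
  by move=> Fy; rewrite /g indicE mem_set ?mul1r.
have g_int : (P \x Q).-integrable setT (EFin \o g).
  apply: measurable_bounded_integrable => //.
    by have /= -> := probability_setT (P \x Q); rewrite ltry.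
  exists `|M|%R; split => // M' MM' [x y] _ /=; rewrite /g indicE.
  have M'0 : (0 <= M')%R by rewrite ltW // (le_lt_trans _ MM').
  case: (boolP (y \in F)) => [/set_mem Fy|_]; last by rewrite mul0r normr0.
  by rewrite mul1r (le_trans (fM x y Fy)) // ltW // (le_lt_trans (ler_norm M)).
transitivity (\int[P]_x \int[Q]_y (g (x, y))%:E).
  apply: eq_integral => x _; apply: (integral_eq_full mF QF).
  - apply/measurable_EFinP; apply: measurableT_comp mf _.
    exact: measurable_fun_pair.
  - apply/measurable_EFinP; apply: measurableT_comp mg _.
    exact: measurable_fun_pair.
  - by move=> y /(gf x) ->.
rewrite (Fubini (f := EFin \o g)) //.
apply: (integral_eq_full mF QF); try exact: measurable_fun_integral1.
by move=> y Fy; apply: eq_integral => x _ /=; rewrite gf.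
Qed.

End fubini_full_measure_set.

Section clamp.
Variable R : realType.
Implicit Types c a : R.

Definition clamp c a : R := if a <= 0 then 0 else if a <= c then a else c.

Lemma clamp_id c a : 0 <= a <= c -> clamp c a = a.
Proof. by case/andP=> a0 ac; rewrite /clamp ac; case: ifPn => // ?; lra. Qed.

Lemma clamp_le c a : 0 <= a -> clamp c a <= a.
Proof.
by move=> a0; rewrite /clamp; case: ifPn => ?; [|case: ifPn => ?]; lra.
Qed.

Lemma measurable_clamp c : measurable_fun setT (clamp c).
Proof.
apply: measurable_fun_ifT => //; first exact: measurable_fun_ler.
by apply: measurable_fun_ifT => //; exact: measurable_fun_ler.
Qed.

Variable c : R.
Hypothesis c0 : 0 < c.

Lemma lebesgue_measure_seg_lt a :
  lebesgue_measure [set t : R | 0 <= t <= c /\ t < a] = (clamp c a)%:E.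
Proof.
rewrite /clamp; case: ifPn => a0.
  rewrite (_ : [set _ | _] = set0) ?measure0 //.
  by apply/seteqP; split => t //= [/andP[t0 _] ta]; lra.
case: ifPn => ac.
  rewrite (_ : [set _ | _] = `[0, a[%classic).
    by rewrite lebesgue_measure_itv /= lte_fin ltNge a0 /= oppr0 adde0.
  apply/seteqP; split => t /=; rewrite in_itv /=.
    by move=> [/andP[-> _] ->].
  by move=> /andP[t0 ta]; split => //; apply/andP; split => //; lra.
rewrite (_ : [set _ | _] = `[0, c]%classic).
  by rewrite lebesgue_measure_itv /= lte_fin c0 oppr0 adde0.
apply/seteqP; split => t /=; rewrite in_itv /=; first by move=> [].
by move=> /andP[t0 tc]; split; [exact/andP | lra].
Qed.

Lemma lebesgue_measure_seg_sub_lt a :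
  lebesgue_measure [set t : R | 0 <= t <= c /\ c - t < a] = (clamp c a)%:E.
Proof.
rewrite /clamp; case: ifPn => a0.
  rewrite (_ : [set _ | _] = set0) ?measure0 //.
  by apply/seteqP; split => t //= [/andP[t0 tc] ta]; lra.
case: ifPn => ac.
  rewrite (_ : [set _ | _] = `]c - a, c]%classic).
    rewrite lebesgue_measure_itv /= lte_fin gtrBl ltNge a0 /=.
    by rewrite -EFinD opprB addrC subrK.
  apply/seteqP; split => t /=; rewrite in_itv /=.
    by move=> [/andP[_ ->] ?]; rewrite andbT; lra.
  by move=> /andP[t0 ta]; split; [apply/andP; split|]; lra.
rewrite (_ : [set _ | _] = `[0, c]%classic).
  by rewrite lebesgue_measure_itv /= lte_fin c0 oppr0 adde0.
apply/seteqP; split => t /=; rewrite in_itv /=; first by move=> [].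
by move=> /andP[t0 tc]; split; [exact/andP | lra].
Qed.

End clamp.

Section symmetric_game.
Variable R : realType.
Implicit Types (B v a b : R) (x y : R * R).

Lemma win_prob_symE B v a b :
  win_prob B B v v a b = if b < a then 1 else if a < b then 0 else 1 / 2.
Proof. by rewrite /win_prob ltxx !andbF. Qed.

Lemma util2_symE B v x1 x2 : util2 B B v v v v x1 x2 = util1 B B v v v v x2 x1.
Proof. by []. Qed.

Lemma item_util_indicE B v a b : item_util B B v v a b =
  v * \1_`]-oo, a[ b + v / 2 * \1_[set a] b - a.
Proof.
rewrite /item_util win_prob_symE !indicE mem_setE in_itv /= in_set1.
by case: ltgtP => _ /=; ring.
Qed.

Lemma measurable_item_util B v d (T : measurableType d) (f g : T -> R) :
  measurable_fun setT f -> measurable_fun setT g ->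
  measurable_fun setT (fun t => item_util B B v v (f t) (g t)).
Proof.
move=> mf mg; under eq_fun do rewrite /item_util win_prob_symE.
apply: measurable_funB => //; apply: measurable_funM => //.
apply: measurable_fun_ifT => //; first exact: measurable_fun_ltr.
by apply: measurable_fun_ifT => //; exact: measurable_fun_ltr.
Qed.

Lemma measurable_util1 B v d (T : measurableType d) (Y X : T -> R * R) :
  measurable_fun setT Y -> measurable_fun setT X ->
  measurable_fun setT (fun t => util1 B B v v v v (Y t) (X t)).
Proof.
move=> mY mX; apply: measurable_funD; apply: measurable_item_util.
- exact: measurableT_comp measurable_fst mY.
- exact: measurableT_comp measurable_fst mX.
- exact: measurableT_comp measurable_snd mY.
- exact: measurableT_comp measurable_snd mX.
Qed.

Lemma measurable_feasible B : measurable (feasible B).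
Proof.
have -> : feasible B = fst @^-1` `[0, +oo[%classic `&`
    (snd @^-1` `[0, +oo[%classic `&`
     (fun x => x.1 + x.2) @^-1` `]-oo, B]%classic).
  by apply/seteqP; split => x; rewrite /feasible /= !in_itv /= !andbT.
apply: measurableI; first exact: measurable_preimageT measurable_fst _.
apply: measurableI; first exact: measurable_preimageT measurable_snd _.
by apply: measurable_preimageT => //; exact: measurable_funD.
Qed.

End symmetric_game.

Section item_expectation.
Context (R : realType) d (T : measurableType d) (Q : probability T R).
Variables (B v a : R) (g : T -> R).
Hypothesis mg : measurable_fun setT g.
Local Open Scope ereal_scope.

Let mlt : measurable (g @^-1` `]-oo, a[). Proof. exact: measurable_preimageT. Qed.

Let meq : measurable (g @^-1` [set a]). Proof. exact: measurable_preimageT. Qed.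

Let item_util_preimageE x : item_util B B v v a (g x) =
  (v * \1_(g @^-1` `]-oo, a[) x + v / 2 * \1_(g @^-1` [set a]) x - a)%R.
Proof. exact: item_util_indicE. Qed.

Let integrableZ_indic k (A : set T) : measurable A ->
  Q.-integrable setT (fun x => (k * \1_A x)%:E).
Proof.
move=> mA; under eq_fun do rewrite EFinM.
by apply: integrableZl => //; exact: integrable_indic.
Qed.

Let integralZ_indic k (A : set T) : measurable A ->
  \int[Q]_x (k * \1_A x)%:E = k%:E * Q A.
Proof.
move=> mA; under eq_integral do rewrite EFinM.
by rewrite integralZl ?integral_indic ?setIT //; exact: integrable_indic.
Qed.

Lemma integrable_item_util :
  Q.-integrable setT (fun x => (item_util B B v v a (g x))%:E).
Proof.
under eq_fun do rewrite item_util_preimageE EFinB EFinD.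
apply: integrableB => //; last exact: finite_measure_integrable_cst.
by apply: integrableD => //; exact: integrableZ_indic.
Qed.

Lemma integral_item_util :
  \int[Q]_x (item_util B B v v a (g x))%:E =
  v%:E * Q (g @^-1` `]-oo, a[) + (v / 2)%:E * Q (g @^-1` [set a]) - a%:E.
Proof.
under eq_integral do rewrite item_util_preimageE EFinB EFinD.
rewrite integralB //; [|by apply: integrableD => //; exact: integrableZ_indic
                      |exact: finite_measure_integrable_cst].
rewrite integralD //; try exact: integrableZ_indic.
by rewrite !integralZ_indic // integral_cst //= probability_setT mule1 EFinN.
Qed.

End item_expectation.

Definition segment (R : realType) (c : R) : set (R * R) :=
  [set y | 0 <= y.1 <= c /\ y.1 + y.2 = c].

Definition seg_payoff (R : realType) (c v : R) (y : R * R) : R :=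
  v * (clamp c y.1 + clamp c y.2) / c - (y.1 + y.2).

Lemma measurable_segment (R : realType) (c : R) : measurable (segment c).
Proof.
have -> : segment c =
    fst @^-1` `[0, c]%classic `&` (fun y => y.1 + y.2) @^-1` [set c].
  by apply/seteqP; split => y; rewrite /segment /= in_itv.
apply: measurableI; first exact: measurable_preimageT measurable_fst _.
by apply: measurable_preimageT => //; exact: measurable_funD.
Qed.

Lemma measurable_seg_payoff (R : realType) (c v : R) :
  measurable_fun setT (seg_payoff c v).
Proof.
apply: measurable_funB; last exact: measurable_funD.
apply: measurable_funM => //; apply: measurable_funM => //.
by apply: measurable_funD; apply: measurableT_comp (measurable_clamp c) _.
Qed.

Section segment_distribution.
Variables (R : realType) (c : R) (P : probability (R * R)%type R).
Hypotheses (c0 : 0 < c)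
  (hP : forall A, measurable A -> P A = seg_distribution c (Num.sqrt 2 * c)^-1 A).

Lemma measurable_seg_param_set A : measurable A -> measurable (seg_param_set c A).
Proof.
move=> mA; have -> : seg_param_set c A =
    `[0, c]%classic `&` ((fun t => (t, c - t)) @^-1` A).
  by apply/seteqP; split => t; rewrite /seg_param_set /= in_itv.
apply: measurableI => //; apply: measurable_preimageT mA.
by apply: measurable_fun_pair => //; exact: measurable_funB.
Qed.

Lemma seg_distributionE A : measurable A ->
  P A = ((c^-1)%:E * lebesgue_measure (seg_param_set c A))%E.
Proof.
move=> mA; rewrite hP // /seg_distribution /seg_arclength muleA -EFinM.
have s0 : 0 < Num.sqrt 2 :> R by rewrite sqrtr_gt0 ltr0n.
by rewrite invfM mulrAC mulVf ?mul1r // gt_eqF.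
Qed.

Lemma seg_fst_lt a : P (fst @^-1` `]-oo, a[) = (clamp c a / c)%:E.
Proof.
rewrite seg_distributionE; last exact: measurable_preimageT measurable_fst _.
rewrite (_ : seg_param_set _ _ = [set t | 0 <= t <= c /\ t < a]).
  by rewrite lebesgue_measure_seg_lt // -EFinM mulrC.
by apply/seteqP; split => t; rewrite /seg_param_set /= in_itv.
Qed.

Lemma seg_snd_lt a : P (snd @^-1` `]-oo, a[) = (clamp c a / c)%:E.
Proof.
rewrite seg_distributionE; last exact: measurable_preimageT measurable_snd _.
rewrite (_ : seg_param_set _ _ = [set t | 0 <= t <= c /\ c - t < a]).
  by rewrite lebesgue_measure_seg_sub_lt // -EFinM mulrC.
by apply/seteqP; split => t; rewrite /seg_param_set /= in_itv.
Qed.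

Lemma seg_param_sub1_measure0 A a : measurable A ->
  seg_param_set c A `<=` [set a] -> P A = 0%E.
Proof.
move=> mA sA; rewrite seg_distributionE //.
rewrite (@subset_measure0 _ _ _ lebesgue_measure _ [set a]) ?mule0 //.
- exact: measurable_seg_param_set.
- exact: lebesgue_measure_set1.
Qed.

Lemma seg_fst_eq a : P (fst @^-1` [set a]) = 0%E.
Proof.
apply: (@seg_param_sub1_measure0 _ a); last by move=> t [].
exact: measurable_preimageT measurable_fst _.
Qed.

Lemma seg_snd_eq a : P (snd @^-1` [set a]) = 0%E.
Proof.
apply: (@seg_param_sub1_measure0 _ (c - a)).
  exact: measurable_preimageT measurable_snd _.
by move=> t [_ /= <-]; rewrite opprB addrC subrK.
Qed.

Lemma seg_segment_eq1 : P (segment c) = 1%E.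
Proof.
rewrite seg_distributionE; last exact: measurable_segment.
rewrite (_ : seg_param_set _ _ = `[0, c]%classic).
  by rewrite lebesgue_measure_itv /= lte_fin c0 oppr0 adde0 -EFinM mulVf ?gt_eqF.
apply/seteqP; split => t; rewrite /seg_param_set /segment /= in_itv /=.
  by case.
by move=> tc; split=> //; split=> //; rewrite addrC subrK.
Qed.

Lemma integral_util1_seg B v y :
  (\int[P]_x (util1 B B v v v v y x)%:E = (seg_payoff c v y)%:E)%E.
Proof.
rewrite /util1; under eq_integral do rewrite EFinD.
rewrite integralD //; last 2 first.
- exact: (integrable_item_util _ _ _ _ measurable_fst).
- exact: (integrable_item_util _ _ _ _ measurable_snd).
rewrite (integral_item_util _ _ _ _ measurable_fst).
rewrite (integral_item_util _ _ _ _ measurable_snd).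
rewrite seg_fst_lt seg_snd_lt seg_fst_eq seg_snd_eq !mule0 !adde0.
rewrite -!EFinM -!EFinB -EFinD; congr EFin.
by rewrite /seg_payoff; field; rewrite gt_eqF.
Qed.

End segment_distribution.

Section best_reply.
Variables (R : realType) (B v : R).
Local Notation c := (Num.min v B).
Hypothesis c0 : 0 < c.

Lemma seg_payoff_le y : feasible B y -> seg_payoff c v y <= v - c.
Proof.
move=> [y1 [y2 yB]]; rewrite /seg_payoff.
have [vB|Bv] := leP v B.
  have v0 : 0 < v by rewrite -(min_l vB).
  rewrite mulrAC divff ?gt_eqF // mul1r.
  by have := clamp_le v y1; have := clamp_le v y2; lra.
have B0 : 0 < B by rewrite -(min_r (ltW Bv)).
rewrite !clamp_id; [|lra|lra].
have -> : v * (y.1 + y.2) / B - (y.1 + y.2) = (v - B) * ((y.1 + y.2) / B).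
  by field; rewrite gt_eqF.
rewrite -[leRHS]mulr1; apply: ler_wpM2l; first by rewrite subr_ge0 ltW.
by rewrite ler_pdivrMr // mul1r.
Qed.

Lemma seg_payoff_segment y : segment c y -> seg_payoff c v y = v - c.
Proof.
move=> [/andP[y10 y1c] y12].
rewrite /seg_payoff !clamp_id; [|lra|lra].
by rewrite y12 mulfK ?gt_eqF.
Qed.

Lemma util1_bounded x y : feasible B y -> `|util1 B B v v v v y x| <= 2 * v + B.
Proof.
move=> [y1 [y2 yB]].
have v0 : 0 <= v by apply: le_trans (ltW c0) _; rewrite ge_min lexx.
have w01 a b : 0 <= win_prob B B v v a b * v <= v.
  rewrite win_prob_symE.
  by case: ifP => _; [|case: ifP => _]; apply/andP; split; lra.
rewrite /util1 /item_util ler_norml.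
by have := w01 y.1 x.1; have := w01 y.2 x.2; move=> /andP[? ?] /andP[? ?]; lra.
Qed.

Lemma integral_seg_payoff_le (Q : probability (R * R)%type R) :
  mixed_strategy B Q -> (\int[Q]_y (seg_payoff c v y)%:E <= (v - c)%:E)%E.
Proof.
move=> QF; apply: (integral_full_le (measurable_feasible B) QF).
- by apply/measurable_EFinP; exact: measurable_seg_payoff.
- by rewrite subr_ge0 ge_min lexx.
- by move=> y Fy; rewrite lee_fin seg_payoff_le.
Qed.

End best_reply.

Section segment_equilibrium.
Variables (R : realType) (B v : R) (P : probability (R * R)%type R).
Local Notation c := (Num.min v B).
Hypotheses (c0 : 0 < c)
  (hP : forall A, measurable A -> P A = seg_distribution c (Num.sqrt 2 * c)^-1 A).
Local Open Scope ereal_scope.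

Lemma seg_mixed_strategy : mixed_strategy B P.
Proof.
apply/eqP; rewrite eq_le probability_le1 /=; last exact: measurable_feasible.
rewrite -(seg_segment_eq1 c0 hP); apply: le_measure; rewrite ?inE.
- exact: measurable_segment.
- exact: measurable_feasible.
move=> y [/andP[y10 y1c] y12]; have cB : (c <= B)%R by rewrite ge_min lexx orbT.
by split => //; split; lra.
Qed.

Lemma integral_seg_payoff_seg : \int[P]_y (seg_payoff c v y)%:E = (v - c)%:E.
Proof.
apply: (integral_full_cst (measurable_segment c) (seg_segment_eq1 c0 hP)).
- by apply/measurable_EFinP; exact: measurable_seg_payoff.
- by move=> y Sy; rewrite seg_payoff_segment.
Qed.

Lemma EU1_seg (Q : probability (R * R)%type R) :
  EU1 B B v v v v Q P = \int[Q]_y (seg_payoff c v y)%:E.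
Proof. by apply: eq_integral => y _; rewrite (integral_util1_seg c0 hP). Qed.

Lemma EU2_seg (Q : probability (R * R)%type R) : mixed_strategy B Q ->
  EU2 B B v v v v P Q = \int[Q]_y (seg_payoff c v y)%:E.
Proof.
move=> QF; have mu := measurable_util1 B v measurable_snd measurable_fst.
rewrite /EU2; under eq_integral do under eq_integral do rewrite util2_symE.
rewrite (@Fubini_full _ _ _ _ _ P _ _ (measurable_feasible B) QF _
  (2 * v + B)%R mu).
- by apply: eq_integral => y _; rewrite (integral_util1_seg c0 hP).
- by move=> x y Fy; exact: util1_bounded.
Qed.

End segment_equilibrium.

Theorem theorem2 (R : realType) (B1 B2 v11 v12 v21 v22 : R)
  (P1 P2 : probability (R * R)%type R) :
  0 <= B1 -> 0 <= B2 -> 0 < v11 -> 0 < v12 -> 0 < v21 -> 0 < v22 ->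
  B1 = B2 -> v11 = v12 -> v12 = v21 -> v21 = v22 ->
  let c := Num.min v11 B1 in
  0 < c ->
  (forall A, measurable A ->
     P1 A = seg_distribution c (Num.sqrt 2 * c)^-1 A) ->
  (forall A, measurable A ->
     P2 A = seg_distribution c (Num.sqrt 2 * c)^-1 A) ->
  nash_eq B1 B2 v11 v12 v21 v22 P1 P2.
Proof.
move=> _ _ _ _ _ _ <- <- <- <- c c0 hP1 hP2.
have P1_mixed := seg_mixed_strategy c0 hP1.
have P2_mixed := seg_mixed_strategy c0 hP2.
split => //.
- move=> Q1 Q1_mixed; rewrite !EU1_seg // (integral_seg_payoff_seg c0 hP1).
  exact: integral_seg_payoff_le.
- move=> Q2 Q2_mixed; rewrite !EU2_seg // (integral_seg_payoff_seg c0 hP2).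
  exact: integral_seg_payoff_le.
Qed.
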